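(* Let $\Gamma_2(t)=\mathbb{A}(t)+\varepsilon^*\mathbb{A}^*(t)$ be a differentiable curve in $\mathbb{S}^2_{\mathbb{D}_2}$, $t\in[0,T]$, with $\mathbb{A}=\mathbf a_0+\varepsilon\mathbf a_1$, $\mathbb{A}^*=\mathbf a_2+\varepsilon\mathbf a_3$, and assume $\mathbf a_0'(t)\neq0$ for all $t$. Let $\Phi_2(t,\mathbb{U})=\mathbb{A}\times\mathbb{A}^*+\mathbb{U}\mathbb{A}$ be its corresponding ruled surface in $\mathbb{D}$. Define the arc-length functions $$s_{\Gamma_2}(t)=\int_0^t|\Gamma_2'(\sigma)|\,d\sigma,\qquad s_{\mathbb{A}}(t)=\int_0^t|\mathbb{A}'(\sigma)|\,d\sigma,\qquad s_{\mathbf a_0}(t)=\int_0^t|\mathbf a_0'(\sigma)|\,d\sigma.$$ Then $\Phi_2$ is developable if and only if (i) $s_{\Gamma_2}(t)=s_{\mathbb{A}}(t)$ for all $t$, or (ii) $s_{\Gamma_2}(t)=s_{\mathbf a_0}(t)$ for all $t$ and the real ruled surface $\Phi(t,u)=\mathbf a_0(t)\times\mathbf a_1(t)+u\,\mathbf a_0(t)$ in $\mathbb{R}^3$ is developable.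
   Context: Dual numbers $D=\{a+\varepsilon a^*\}$, $\varepsilon^2=0$, $\varepsilon\ne0$. Dual vectors $\mathbb{D}=\{\mathbf a+\varepsilon\mathbf a^*:\mathbf a,\mathbf a^*\in\mathbb{R}^3\}$ with $D$-valued inner product $\langle\mathbf a+\varepsilon\mathbf a^*,\mathbf b+\varepsilon\mathbf b^*\rangle=\mathbf a\cdot\mathbf b+\varepsilon(\mathbf a^*\cdot\mathbf b+\mathbf a\cdot\mathbf b^* )$, cross product $(\mathbf a+\varepsilon\mathbf a^* )\times(\mathbf b+\varepsilon\mathbf b^* )=\mathbf a\times\mathbf b+\varepsilon(\mathbf a\times\mathbf b^*+\mathbf a^*\times\mathbf b)$, dual determinant $\det(X,Y,Z)=\langle X,Y\times Z\rangle$, and norm (for $\mathbf a\neq0$) $|\mathbf a+\varepsilon\mathbf a^*|=|\mathbf a|+\varepsilon\frac{\mathbf a\cdot\mathbf a^*}{|\mathbf a|}$. Hyper-dual vectors $\mathbb{D}_2=\{\mathbb{A}+\varepsilon^*\mathbb{A}^*\}$ with $\varepsilon^{*2}=0$, $\varepsilon\varepsilon^*=\varepsilon^*\varepsilon\ne0$, $(\varepsilon\varepsilon^* )^2=0$; inner product $\langle\mathbb{A}+\varepsilon^*\mathbb{A}^*,\mathbb{B}+\varepsilon^*\mathbb{B}^*\rangle_2=\langle\mathbb{A},\mathbb{B}\rangle+\varepsilon^*(\langle\mathbb{A},\mathbb{B}^*\rangle+\langle\mathbb{A}^*,\mathbb{B}\rangle)$; norm (when the real part of $\mathbb{A}$ is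 nonzero) $|\mathbb{A}+\varepsilon^*\mathbb{A}^*|=|\mathbb{A}|+\varepsilon^*\frac{\langle\mathbb{A},\mathbb{A}^*\rangle}{|\mathbb{A}|}$ (division by an invertible dual number). Unit hyper-dual sphere $\mathbb{S}^2_{\mathbb{D}_2}=\{\mathbb{A}+\varepsilon^*\mathbb{A}^*:\langle\mathbb{A},\mathbb{A}\rangle=1,\langle\mathbb{A},\mathbb{A}^*\rangle=0\}$. Derivatives and integrals of dual/hyper-dual valued functions are taken componentwise. A ruled surface $\mathbb{B}(t)+\mathbb{U}\mathbb{B}^*(t)$ in $\mathbb{D}$ ($\mathbb{U}\in D$) is developable if $\det(\mathbb{B}',\mathbb{B}^*,\mathbb{B}^{*\prime})=0$ for all $t$; a real ruled surface $\beta(t)+u\alpha(t)$ in $\mathbb{R}^3$ is developable if $\det(\beta'(t),\alpha(t),\alpha'(t))=0$ for all $t$. *)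

From Stdlib Require Import Reals.
From Coquelicot Require Import Coquelicot.
Open Scope R_scope.

Record vec3 := V3 { v1 : R; v2 : R; v3 : R }.
Definition vzero : vec3 := V3 0 0 0.
Definition dot (a b : vec3) : R := v1 a * v1 b + v2 a * v2 b + v3 a * v3 b.
Definition cross (a b : vec3) : vec3 :=
  V3 (v2 a * v3 b - v3 a * v2 b) (v3 a * v1 b - v1 a * v3 b) (v1 a * v2 b - v2 a * v1 b).
Definition vnorm (a : vec3) : R := sqrt (dot a a).
Definition det3 (a b c : vec3) : R := dot a (cross b c).

(** Dual numbers a + eps a_star *)
Record dnum := DN { dre : R; ddu : R }.
Definition d_of_r (r : R) : dnum := DN r 0.
(** division by an invertible dual number (real part nonzero):
    (a + eps as)/(b + eps bs) = a/b + eps (as b - a bs)/b^2 *)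
Definition ddiv (x y : dnum) : dnum :=
  DN (dre x / dre y) ((ddu x * dre y - dre x * ddu y) / (dre y ^ 2)).

Record dvec := DV { dvre : vec3; dvdu : vec3 }.
Definition dinner (X Y : dvec) : dnum :=
  DN (dot (dvre X) (dvre Y)) (dot (dvdu X) (dvre Y) + dot (dvre X) (dvdu Y)).
Definition dvadd (a b : vec3) : vec3 := V3 (v1 a + v1 b) (v2 a + v2 b) (v3 a + v3 b).
Definition dcross (X Y : dvec) : dvec :=
  DV (cross (dvre X) (dvre Y)) (dvadd (cross (dvre X) (dvdu Y)) (cross (dvdu X) (dvre Y))).
Definition ddet (X Y Z : dvec) : dnum := dinner X (dcross Y Z).
(** norm |a + eps as| = |a| + eps (a.as)/|a|  (meaningful for a <> 0) *)
Definition dvnorm (X : dvec) : dnum :=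
  DN (vnorm (dvre X)) (dot (dvre X) (dvdu X) / vnorm (dvre X)).

(** Hyper-dual numbers and vectors  A + eps2 As *)
Record hdnum := HN { hre : dnum; hdu : dnum }.
Definition h_of_d (x : dnum) : hdnum := HN x (DN 0 0).
Record hdvec := HV { hvre : dvec; hvdu : dvec }.
Definition hnorm (X : hdvec) : hdnum :=
  HN (dvnorm (hvre X)) (ddiv (dinner (hvre X) (hvdu X)) (dvnorm (hvre X))).
Definition in_hsphere (X : hdvec) : Prop :=
  dinner (hvre X) (hvre X) = DN 1 0 /\ dinner (hvre X) (hvdu X) = DN 0 0.

Definition vderiv (f : R -> vec3) (t : R) : vec3 :=
  V3 (Derive (fun s => v1 (f s)) t) (Derive (fun s => v2 (f s)) t) (Derive (fun s => v3 (f s)) t).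
Definition dvderiv (f : R -> dvec) (t : R) : dvec :=
  DV (vderiv (fun s => dvre (f s)) t) (vderiv (fun s => dvdu (f s)) t).
Definition hvderiv (f : R -> hdvec) (t : R) : hdvec :=
  HV (dvderiv (fun s => hvre (f s)) t) (dvderiv (fun s => hvdu (f s)) t).

Definition dint (f : R -> dnum) (a b : R) : dnum :=
  DN (RInt (fun s => dre (f s)) a b) (RInt (fun s => ddu (f s)) a b).
Definition hint (f : R -> hdnum) (a b : R) : hdnum :=
  HN (dint (fun s => hre (f s)) a b) (dint (fun s => hdu (f s)) a b).

Definition C1_on (g : R -> R) (T : R) : Prop :=
  forall t, 0 <= t <= T -> ex_derive g t /\ continuous (Derive g) t.
Definition vC1_on (f : R -> vec3) (T : R) : Prop :=
  C1_on (fun s => v1 (f s)) T /\ C1_on (fun s => v2 (f s)) T /\ C1_on (fun s => v3 (f s)) T.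
Definition dvC1_on (f : R -> dvec) (T : R) : Prop :=
  vC1_on (fun s => dvre (f s)) T /\ vC1_on (fun s => dvdu (f s)) T.
Definition hvC1_on (f : R -> hdvec) (T : R) : Prop :=
  dvC1_on (fun s => hvre (f s)) T /\ dvC1_on (fun s => hvdu (f s)) T.

(** dual ruled surface B(t) + U B*(t) *)
Definition dual_ruled_surface (B Bs : R -> dvec) (t : R) (U : dnum) : dvec :=
  DV (dvadd (dvre (B t)) (V3 (dre U * v1 (dvre (Bs t))) (dre U * v2 (dvre (Bs t))) (dre U * v3 (dvre (Bs t)))))
     (dvadd (dvdu (B t))
        (dvadd (V3 (dre U * v1 (dvdu (Bs t))) (dre U * v2 (dvdu (Bs t))) (dre U * v3 (dvdu (Bs t))))
               (V3 (ddu U * v1 (dvre (Bs t))) (ddu U * v2 (dvre (Bs t))) (ddu U * v3 (dvre (Bs t)))))).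
Definition dual_developable (B Bs : R -> dvec) (T : R) : Prop :=
  forall t, 0 <= t <= T -> ddet (dvderiv B t) (Bs t) (dvderiv Bs t) = DN 0 0.
(** real ruled surface beta(t) + u alpha(t) *)
Definition real_developable (beta alpha : R -> vec3) (T : R) : Prop :=
  forall t, 0 <= t <= T -> det3 (vderiv beta t) (alpha t) (vderiv alpha t) = 0.

From Stdlib Require Import Reals Lra.
From Coquelicot Require Import Coquelicot.
Open Scope R_scope.

(* On the hyper-dual unit sphere, <A, A> = 1 and <A, As> = 0, and differentiating the first
   constraint gives <A', A> = 0.  With these, Lagrange's identity collapses the developability
   determinant det((A × As)', A, A') to <A', As'>.  Up to the factor |A'|, invertible because
   a0' never vanishes, this is also the eps*-part of the speed |Gamma2'|, whose remaining part
   is |A'|.  So Phi2 is developable iff s_Gamma2 has no eps*-part, which is (i); conversely both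
   (i) and (ii) kill that part of s_Gamma2, and by continuity of the integrand the integrand
   itself vanishes. *)

Lemma interval_point_near (T t : R) (delta : posreal) :
  0 < T -> 0 <= t <= T -> exists h, h <> 0 /\ Rabs h < delta /\ 0 <= t + h <= T.
Proof.
  intros HT Ht; pose proof (cond_pos delta) as Hd.
  destruct (Rlt_dec t T) as [Hlt | Hge].
  - exists (Rmin (delta / 2) (T - t)).
    assert (0 < Rmin (delta / 2) (T - t)) by (apply Rmin_pos; lra).
    pose proof (Rmin_l (delta / 2) (T - t)); pose proof (Rmin_r (delta / 2) (T - t)).
    rewrite Rabs_pos_eq; lra.
  - exists (- Rmin (delta / 2) T).
    assert (0 < Rmin (delta / 2) T) by (apply Rmin_pos; lra).
    pose proof (Rmin_l (delta / 2) T); pose proof (Rmin_r (delta / 2) T).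
    rewrite Rabs_Ropp, Rabs_pos_eq; lra.
Qed.

(* One-sided difference quotients suffice, so this also holds at the endpoints. *)
Lemma is_derive_const_on (f : R -> R) (T t c d : R) :
  0 < T -> 0 <= t <= T -> (forall s, 0 <= s <= T -> f s = c) ->
  is_derive f t d -> d = 0.
Proof.
  intros HT Ht Hc Hd; apply is_derive_Reals in Hd.
  destruct (Req_dec d 0) as [| Hne]; [assumption | exfalso].
  destruct (Hd (Rabs d) (Rabs_pos_lt _ Hne)) as [delta Hdelta].
  destruct (interval_point_near T t delta HT Ht) as (h & Hh0 & Hhd & Hth).
  specialize (Hdelta h Hh0 Hhd); rewrite (Hc _ Hth), (Hc _ Ht) in Hdelta.
  replace ((c - c) / h - d) with (- d) in Hdelta by (field; assumption).
  rewrite Rabs_Ropp in Hdelta; lra.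
Qed.

Lemma RInt_eq0_on_continuous (g : R -> R) (T : R) :
  0 < T -> (forall t, 0 <= t <= T -> continuous g t) ->
  (forall t, 0 <= t <= T -> RInt g 0 t = 0) -> forall t, 0 <= t <= T -> g t = 0.
Proof.
  intros HT Hc Hi t Ht; set (c := g t).
  destruct (Req_dec c 0) as [| Hne]; [assumption | exfalso].
  destruct (proj1 (filterlim_locally g c) (Hc t Ht) (mkposreal _ (Rabs_pos_lt _ Hne)))
    as [delta Hdelta].
  destruct (interval_point_near T t delta HT Ht) as (h & Hh0 & Hhd & Hth).
  set (a := Rmin t (t + h)); set (b := Rmax t (t + h)).
  assert (Hab : a < b /\ 0 <= a /\ b <= T /\ t - delta < a /\ b < t + delta).
  { unfold a, b, Rmin, Rmax; apply Rabs_def2 in Hhd.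
    destruct (Rle_dec t (t + h)); lra. }
  assert (Hex : forall u v, 0 <= u <= T -> 0 <= v <= T -> ex_RInt g u v).
  { intros u v Hu Hv; apply (@ex_RInt_continuous R_CompleteNormedModule).
    intros z [Hz1 Hz2]; apply Hc; split.
    - eapply Rle_trans; [| exact Hz1]; apply Rmin_glb; lra.
    - eapply Rle_trans; [exact Hz2 |]; apply Rmax_lub; lra. }
  assert (Hab0 : RInt g a b = 0).
  { pose proof (RInt_Chasles g 0 a b (Hex 0 a ltac:(lra) ltac:(lra))
                  (Hex a b ltac:(lra) ltac:(lra))) as Hchasles.
    rewrite (Hi a ltac:(lra)), (Hi b ltac:(lra)) in Hchasles.
    unfold plus in Hchasles; simpl in Hchasles; lra. }
  (* [g] keeps the sign of [c] near [t], so [c * g] has positive integral on [a, b]. *)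
  assert (Hpos : 0 < RInt (fun x => c * g x) a b).
  { apply RInt_gt_0; [lra | |].
    - intros x Hx; specialize (Hdelta x).
      assert (Hball : ball c (Rabs c) (g x)) by (apply Hdelta; change (Rabs (x - t) < delta); apply Rabs_def1; lra).
      change (Rabs (g x - c) < Rabs c) in Hball.
      apply Rabs_def2 in Hball; destruct (Rcase_abs c) as [Hc0 | Hc0];
        [rewrite Rabs_left in Hball | rewrite Rabs_pos_eq in Hball]; nra.
    - intros x Hx; apply (continuous_mult (fun _ => c) g);
        [apply continuous_const | apply Hc; lra]. }
  pose proof (RInt_scal g a b c (Hex a b ltac:(lra) ltac:(lra))) as Hscal.
  unfold scal in Hscal; simpl in Hscal; unfold mult in Hscal; simpl in Hscal.
  rewrite Hscal, Hab0, Rmult_0_r in Hpos; lra.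
Qed.

Definition is_vderive (f : R -> vec3) (t : R) (v : vec3) : Prop :=
  is_derive (fun s => v1 (f s)) t (v1 v) /\ is_derive (fun s => v2 (f s)) t (v2 v) /\
  is_derive (fun s => v3 (f s)) t (v3 v).

Definition vcontinuous (f : R -> vec3) (t : R) : Prop :=
  continuous (fun s => v1 (f s)) t /\ continuous (fun s => v2 (f s)) t /\
  continuous (fun s => v3 (f s)) t.

Definition is_dvderive (f : R -> dvec) (t : R) (X : dvec) : Prop :=
  is_vderive (fun s => dvre (f s)) t (dvre X) /\ is_vderive (fun s => dvdu (f s)) t (dvdu X).

Definition dvcontinuous (f : R -> dvec) (t : R) : Prop :=
  vcontinuous (fun s => dvre (f s)) t /\ vcontinuous (fun s => dvdu (f s)) t.

Definition dcontinuous (f : R -> dnum) (t : R) : Prop :=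
  continuous (fun s => dre (f s)) t /\ continuous (fun s => ddu (f s)) t.

Definition dvplus (X Y : dvec) : dvec := DV (dvadd (dvre X) (dvre Y)) (dvadd (dvdu X) (dvdu Y)).

Lemma dot_comm (a b : vec3) : dot a b = dot b a.
Proof. unfold dot; ring. Qed.

Lemma vnorm_gt0 (a : vec3) : a <> vzero -> 0 < vnorm a.
Proof.
  intros Ha; apply sqrt_lt_R0; destruct a as [x y z]; unfold dot; simpl.
  destruct (Req_dec x 0); [destruct (Req_dec y 0); [destruct (Req_dec z 0) |] |]; try nra.
  subst; contradiction Ha; reflexivity.
Qed.

Lemma is_derive_eq_value (f : R -> R) (t l l' : R) : is_derive f t l -> l = l' -> is_derive f t l'.
Proof. intros Hf <-; exact Hf. Qed.

Lemma is_vderive_unique (f : R -> vec3) (t : R) (v : vec3) : is_vderive f t v -> vderiv f t = v.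
Proof.
  intros (H1 & H2 & H3); destruct v; unfold vderiv; simpl in *.
  f_equal; apply is_derive_unique; assumption.
Qed.

Lemma is_dvderive_unique (f : R -> dvec) (t : R) (X : dvec) : is_dvderive f t X -> dvderiv f t = X.
Proof.
  intros [Hre Hdu]; destruct X; unfold dvderiv; simpl in *.
  f_equal; apply is_vderive_unique; assumption.
Qed.

Lemma vC1_on_is_vderive (f : R -> vec3) (T t : R) :
  vC1_on f T -> 0 <= t <= T -> is_vderive f t (vderiv f t).
Proof.
  intros (H1 & H2 & H3) Ht; split; [| split]; apply Derive_correct;
    [apply (H1 t Ht) | apply (H2 t Ht) | apply (H3 t Ht)].
Qed.

Lemma vC1_on_vcontinuous (f : R -> vec3) (T t : R) :
  vC1_on f T -> 0 <= t <= T -> vcontinuous (vderiv f) t.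
Proof. intros (H1 & H2 & H3) Ht; split; [| split]; [apply (H1 t Ht) | apply (H2 t Ht) | apply (H3 t Ht)]. Qed.

Lemma dvC1_on_is_dvderive (f : R -> dvec) (T t : R) :
  dvC1_on f T -> 0 <= t <= T -> is_dvderive f t (dvderiv f t).
Proof. intros [Hre Hdu] Ht; split; eapply vC1_on_is_vderive; eassumption. Qed.

Lemma dvC1_on_dvcontinuous (f : R -> dvec) (T t : R) :
  dvC1_on f T -> 0 <= t <= T -> dvcontinuous (dvderiv f) t.
Proof. intros [Hre Hdu] Ht; split; eapply vC1_on_vcontinuous; eassumption. Qed.

Lemma is_derive_dot (f g : R -> vec3) (t : R) (u v : vec3) :
  is_vderive f t u -> is_vderive g t v ->
  is_derive (fun s => dot (f s) (g s)) t (dot u (g t) + dot (f t) v).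
Proof.
  intros (F1 & F2 & F3) (G1 & G2 & G3); unfold dot.
  eapply is_derive_eq_value.
  - apply (is_derive_plus (V := R_NormedModule)); [apply (is_derive_plus (V := R_NormedModule)) |];
      apply Derive.is_derive_mult; eassumption.
  - unfold plus; simpl; ring.
Qed.

Lemma is_vderive_cross (f g : R -> vec3) (t : R) (u v : vec3) :
  is_vderive f t u -> is_vderive g t v ->
  is_vderive (fun s => cross (f s) (g s)) t (dvadd (cross u (g t)) (cross (f t) v)).
Proof.
  intros (F1 & F2 & F3) (G1 & G2 & G3); unfold cross; simpl.
  split; [| split]; (eapply is_derive_eq_value;
    [apply (is_derive_minus (V := R_NormedModule)); apply Derive.is_derive_mult; eassumption
    | unfold minus, plus, opp; simpl; ring]).
Qed.

Lemma is_vderive_dvadd (f g : R -> vec3) (t : R) (u v : vec3) :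
  is_vderive f t u -> is_vderive g t v ->
  is_vderive (fun s => dvadd (f s) (g s)) t (dvadd u v).
Proof.
  intros (F1 & F2 & F3) (G1 & G2 & G3); unfold dvadd; simpl.
  split; [| split]; apply (is_derive_plus (V := R_NormedModule)); assumption.
Qed.

Lemma dvadd_interchange (a b c d : vec3) :
  dvadd (dvadd a b) (dvadd c d) = dvadd (dvadd a c) (dvadd b d).
Proof. destruct a, b, c, d; unfold dvadd; simpl; f_equal; ring. Qed.

Lemma is_dvderive_dcross (f g : R -> dvec) (t : R) (X Y : dvec) :
  is_dvderive f t X -> is_dvderive g t Y ->
  is_dvderive (fun s => dcross (f s) (g s)) t (dvplus (dcross X (g t)) (dcross (f t) Y)).
Proof.
  intros [Fre Fdu] [Gre Gdu]; split; simpl.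
  - exact (is_vderive_cross _ _ _ _ _ Fre Gre).
  - rewrite dvadd_interchange.
    exact (is_vderive_dvadd _ _ _ _ _ (is_vderive_cross _ _ _ _ _ Fre Gdu)
             (is_vderive_cross _ _ _ _ _ Fdu Gre)).
Qed.

Lemma dinner_deriv_unit (f : R -> dvec) (T t : R) (X : dvec) :
  0 < T -> 0 <= t <= T -> (forall s, 0 <= s <= T -> dinner (f s) (f s) = DN 1 0) ->
  is_dvderive f t X -> dinner X (f t) = DN 0 0.
Proof.
  intros HT Ht Hunit [Hre Hdu].
  assert (Dre : dot (dvre X) (dvre (f t)) + dot (dvre (f t)) (dvre X) = 0).
  { eapply (is_derive_const_on (fun s => dot (dvre (f s)) (dvre (f s))) T t 1); try eassumption.
    - intros s Hs; exact (f_equal dre (Hunit s Hs)).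
    - exact (is_derive_dot _ _ _ _ _ Hre Hre). }
  assert (Ddu : dot (dvdu X) (dvre (f t)) + dot (dvdu (f t)) (dvre X)
                + (dot (dvre X) (dvdu (f t)) + dot (dvre (f t)) (dvdu X)) = 0).
  { eapply (is_derive_const_on
      (fun s => dot (dvdu (f s)) (dvre (f s)) + dot (dvre (f s)) (dvdu (f s))) T t 0);
      try eassumption.
    - intros s Hs; exact (f_equal ddu (Hunit s Hs)).
    - apply (is_derive_plus (V := R_NormedModule)); apply is_derive_dot; assumption. }
  rewrite (dot_comm (dvre (f t))) in Dre.
  rewrite (dot_comm (dvdu (f t))), (dot_comm (dvre (f t)) (dvdu X)) in Ddu.
  unfold dinner; f_equal; lra.
Qed.

(* Lagrange's identity [(p × q)·(r × s) = (p·r)(q·s) - (p·s)(q·r)], expanded in both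
   components, with the constraint defects [a0·a0 - 1], [a0·a2], [b0·a0], ... made explicit. *)
Lemma ddet_dcross_deriv_unit (X Y X' Y' : dvec) :
  dinner X X = DN 1 0 -> dinner X Y = DN 0 0 -> dinner X' X = DN 0 0 ->
  ddet (dvplus (dcross X' Y) (dcross X Y')) X X' = dinner X' Y'.
Proof.
  destruct X as [a0 a1], Y as [a2 a3], X' as [b0 b1], Y' as [b2 b3].
  unfold dinner at 1 2 3; simpl; intros Hunit Hperp Htan.
  injection Hunit as Hm0 Hm1; injection Hperp as Hs0 Hs1; injection Htan as Hp0 Hp1.
  assert (Ere : dre (ddet (dvplus (dcross (DV b0 b1) (DV a2 a3)) (dcross (DV a0 a1) (DV b2 b3)))
                  (DV a0 a1) (DV b0 b1))
    = dot b0 b2 + dot b0 a0 * dot a2 b0 - dot b0 b0 * dot a0 a2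
      + (dot a0 a0 - 1) * dot b2 b0 - dot b0 a0 * dot b2 a0).
  { destruct a0, a1, a2, a3, b0, b1, b2, b3.
    unfold ddet, dinner, dcross, dvplus, cross, dvadd, dot; simpl; ring. }
  assert (Edu : ddu (ddet (dvplus (dcross (DV b0 b1) (DV a2 a3)) (dcross (DV a0 a1) (DV b2 b3)))
                  (DV a0 a1) (DV b0 b1))
    = (dot b1 b2 + dot b0 b3)
      + dot b0 a0 * (dot a3 b0 + dot a2 b1) + (dot b1 a0 + dot b0 a1) * dot a2 b0
      - dot b0 b0 * (dot a1 a2 + dot a0 a3) - (dot b1 b0 + dot b0 b1) * dot a0 a2
      + (dot a0 a0 - 1) * (dot b3 b0 + dot b2 b1) + (dot a1 a0 + dot a0 a1) * dot b2 b0
      - dot b0 a0 * (dot b3 a0 + dot b2 a1) - (dot b1 a0 + dot b0 a1) * dot b2 a0).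
  { destruct a0, a1, a2, a3, b0, b1, b2, b3.
    unfold ddet, dinner, dcross, dvplus, cross, dvadd, dot; simpl; ring. }
  rewrite Hm0, Hs0, Hp0 in Ere; rewrite Hm0, Hm1, Hs0, Hs1, Hp0, Hp1 in Edu.
  destruct (ddet _ _ _) as [x y]; simpl in Ere, Edu; unfold dinner; simpl.
  f_equal; lra.
Qed.

Lemma ddet_developable_dinner (A As : R -> dvec) (T t : R) :
  0 < T -> 0 <= t <= T -> dvC1_on A T -> dvC1_on As T ->
  (forall s, 0 <= s <= T -> dinner (A s) (A s) = DN 1 0) -> dinner (A t) (As t) = DN 0 0 ->
  ddet (dvderiv (fun s => dcross (A s) (As s)) t) (A t) (dvderiv A t)
  = dinner (dvderiv A t) (dvderiv As t).
Proof.
  intros HT Ht HA HAs Hunit Hperp.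
  pose proof (dvC1_on_is_dvderive A T t HA Ht) as DA.
  pose proof (dvC1_on_is_dvderive As T t HAs Ht) as DAs.
  rewrite (is_dvderive_unique _ _ _ (is_dvderive_dcross _ _ _ _ _ DA DAs)).
  apply ddet_dcross_deriv_unit; [apply Hunit | | eapply dinner_deriv_unit]; eassumption.
Qed.

Lemma ddiv_eq0 (x y : dnum) : 0 < dre y -> ddiv x y = DN 0 0 <-> x = DN 0 0.
Proof.
  destruct x as [x0 x1], y as [y0 y1]; unfold ddiv; simpl; intros Hy; split.
  - intros Hq; injection Hq as H0 H1.
    assert (Hx0 : x0 = 0).
    { replace x0 with (x0 / y0 * y0) by (field; lra); rewrite H0; ring. }
    subst x0; f_equal.
    replace x1 with ((x1 * y0 - 0 * y1) / (y0 * (y0 * 1)) * y0) by (field; lra).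
    rewrite H1; ring.
  - intros Hx; injection Hx as -> ->; f_equal; unfold Rdiv; ring.
Qed.

Lemma continuous_Rdiv (f g : R -> R) (t : R) :
  continuous f t -> continuous g t -> g t <> 0 -> continuous (fun s => f s / g s) t.
Proof.
  intros Hf Hg Hg0; apply (continuous_mult f (fun s => / g s)); [assumption |].
  apply continuous_Rinv_comp; assumption.
Qed.

Lemma continuous_dot (f g : R -> vec3) (t : R) :
  vcontinuous f t -> vcontinuous g t -> continuous (fun s => dot (f s) (g s)) t.
Proof.
  intros (F1 & F2 & F3) (G1 & G2 & G3); unfold dot.
  repeat apply (continuous_plus (V := R_NormedModule));
    apply (continuous_mult (K := R_AbsRing)); assumption.
Qed.

Lemma dcontinuous_dinner (f g : R -> dvec) (t : R) :
  dvcontinuous f t -> dvcontinuous g t -> dcontinuous (fun s => dinner (f s) (g s)) t.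
Proof.
  intros [Fre Fdu] [Gre Gdu]; split; simpl.
  - apply continuous_dot; assumption.
  - apply (continuous_plus (V := R_NormedModule)); apply continuous_dot; assumption.
Qed.

Lemma dcontinuous_dvnorm (f : R -> dvec) (t : R) :
  dvcontinuous f t -> dvre (f t) <> vzero -> dcontinuous (fun s => dvnorm (f s)) t.
Proof.
  intros [Fre Fdu] Hf0; pose proof (vnorm_gt0 _ Hf0) as Hpos.
  assert (Hnorm : continuous (fun s => vnorm (dvre (f s))) t).
  { apply continuous_sqrt_comp, continuous_dot; assumption. }
  split; simpl; [exact Hnorm |].
  apply continuous_Rdiv; [apply continuous_dot | | lra]; assumption.
Qed.

Lemma dcontinuous_ddiv (f g : R -> dnum) (t : R) :
  dcontinuous f t -> dcontinuous g t -> dre (g t) <> 0 ->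
  dcontinuous (fun s => ddiv (f s) (g s)) t.
Proof.
  intros [Fre Fdu] [Gre Gdu] Hg0; unfold ddiv; split; cbn [dre ddu].
  - apply continuous_Rdiv; assumption.
  - apply continuous_Rdiv; [| | apply pow_nonzero; assumption].
    + apply (continuous_minus (V := R_NormedModule));
        apply (continuous_mult (K := R_AbsRing)); assumption.
    + change (continuous (fun s => dre (g s) * (dre (g s) * 1)) t).
      repeat apply (continuous_mult (K := R_AbsRing)); try assumption.
      apply continuous_const.
Qed.

Lemma dint_eq0 (f : R -> dnum) (t : R) :
  0 <= t -> (forall s, 0 <= s <= t -> f s = DN 0 0) -> dint f 0 t = DN 0 0.
Proof.
  intros Ht Hf; unfold dint.
  rewrite (RInt_ext (fun s => dre (f s)) (fun _ => 0)),
          (RInt_ext (fun s => ddu (f s)) (fun _ => 0)), RInt_const.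
  - unfold scal; simpl; unfold mult; simpl; f_equal; ring.
  - intros s Hs; rewrite Rmin_left, Rmax_right in Hs by lra; rewrite Hf by lra; reflexivity.
  - intros s Hs; rewrite Rmin_left, Rmax_right in Hs by lra; rewrite Hf by lra; reflexivity.
Qed.

Lemma dint_eq0_dcontinuous (f : R -> dnum) (T : R) :
  0 < T -> (forall t, 0 <= t <= T -> dcontinuous f t) ->
  (forall t, 0 <= t <= T -> dint f 0 t = DN 0 0) -> forall t, 0 <= t <= T -> f t = DN 0 0.
Proof.
  intros HT Hc Hi t Ht.
  assert (Hre : dre (f t) = 0).
  { apply (RInt_eq0_on_continuous (fun s => dre (f s)) T HT); [| | exact Ht].
    - intros s Hs; apply (Hc s Hs).
    - intros s Hs; exact (f_equal dre (Hi s Hs)). }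
  assert (Hdu : ddu (f t) = 0).
  { apply (RInt_eq0_on_continuous (fun s => ddu (f s)) T HT); [| | exact Ht].
    - intros s Hs; apply (Hc s Hs).
    - intros s Hs; exact (f_equal ddu (Hi s Hs)). }
  destruct (f t); simpl in *; subst; reflexivity.
Qed.

Theorem corollary2 (T : R) (Gamma2 : R -> hdvec) :
  let A  : R -> dvec := fun t => hvre (Gamma2 t) in
  let As : R -> dvec := fun t => hvdu (Gamma2 t) in
  let a0 : R -> vec3 := fun t => dvre (A t) in
  let a1 : R -> vec3 := fun t => dvdu (A t) in
  let s_Gamma2 : R -> hdnum := fun t => hint (fun s => hnorm (hvderiv Gamma2 s)) 0 t in
  let s_A : R -> dnum := fun t => dint (fun s => dvnorm (dvderiv A s)) 0 t in
  let s_a0 : R -> R := fun t => RInt (fun s => vnorm (vderiv a0 s)) 0 t in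
  0 < T ->
  hvC1_on Gamma2 T ->
  (forall t, 0 <= t <= T -> in_hsphere (Gamma2 t)) ->
  (forall t, 0 <= t <= T -> vderiv a0 t <> vzero) ->
  (dual_developable (fun t => dcross (A t) (As t)) A T <->
     (forall t, 0 <= t <= T -> s_Gamma2 t = h_of_d (s_A t)) \/
     ((forall t, 0 <= t <= T -> s_Gamma2 t = h_of_d (d_of_r (s_a0 t))) /\
      real_developable (fun t => cross (a0 t) (a1 t)) a0 T)).
Proof.
  intros A As a0 a1 s_Gamma2 s_A s_a0 HT [HA HAs] Hsph Ha0'.
  assert (Hdet : forall t, 0 <= t <= T ->
    ddet (dvderiv (fun s => dcross (A s) (As s)) t) (A t) (dvderiv A t)
    = dinner (dvderiv A t) (dvderiv As t)).
  { intros t Ht; apply (ddet_developable_dinner A As T t); try assumption;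
      [intros s Hs |]; apply Hsph; assumption. }
  set (speed_eps := fun s => hdu (hnorm (hvderiv Gamma2 s))).
  assert (Hspeed : forall t, 0 <= t <= T ->
    speed_eps t = DN 0 0 <-> dinner (dvderiv A t) (dvderiv As t) = DN 0 0).
  { intros t Ht; apply ddiv_eq0, vnorm_gt0, Ha0'; assumption. }
  split.
  - intros Hdev; left; intros t Ht; unfold s_Gamma2, hint, h_of_d; f_equal.
    apply dint_eq0; [lra |]; intros s Hs.
    apply Hspeed; [lra |]; rewrite <- Hdet by lra; apply Hdev; lra.
  - intros Harc t Ht; rewrite Hdet by assumption; apply Hspeed; [assumption |].
    apply (dint_eq0_dcontinuous speed_eps T HT); [| | assumption].
    + intros s Hs; apply dcontinuous_ddiv.
      * apply dcontinuous_dinner; eapply dvC1_on_dvcontinuous; eassumption.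
      * apply dcontinuous_dvnorm; [eapply dvC1_on_dvcontinuous; eassumption | apply Ha0'; assumption].
      * apply Rgt_not_eq, vnorm_gt0, Ha0'; assumption.
    + intros s Hs; destruct Harc as [Heq | [Heq _]]; exact (f_equal hdu (Heq s Hs)).
Qed.
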